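(* Let $w$ be a word over $\Omega$ of length $k$ and let $i \in I \setminus \{s\}$. Then $i + T(i) < k - s$.
   Context: Let $\Omega$ be a finite alphabet; a word of length $k$ is written $w = w_k w_{k-1}\dots w_1$. Autocorrelation: for $1 \le i \le k$, $b_i = 1$ if $w_j = w_{k-i+j}$ for all $j=1,\dots,i$, else $b_i=0$. $s = \max\{j \in\{1,\dots,k-1\}: b_j = 1\}$, or $s=0$ if no such $j$. For $1 \le i \le k-1$ with $b_i = 1$, let $[i] = \max\{ j \in \{1,\dots,k-1\} : b_j = 1 \text{ and } i = k - t(k-j) \text{ for some integer } 1 \le t \le \lfloor k/(k-j) \rfloor\}$, and $I = \{[i] : 1 \le i \le k-1,\ b_i = 1\}$ (its largest element is $s$ when $s>0$). For $i \in I$, $T(i) = \max\{ t > 0 : w_{k-i}w_{k-i-1}\dots w_{k-i-t+1} = w_{k-j}w_{k-j-1}\dots w_{k-j-t+1} \text{ for some } j \in I,\ j > i\}$, with $T(i) = 0$ if this set is empty. *)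

From mathcomp Require Import all_boot.
Set Implicit Arguments. Unset Strict Implicit. Unset Printing Implicit Defensive.

(* A word of length k over the alphabet Omega, w = w_k w_{k-1} ... w_1, is
   represented by a function w : nat -> Omega; the letter w_j is (w j) for
   1 <= j <= k.  Values of w outside 1..k are never used below. *)

Section Autocorr.
Variables (Omega : finType) (k : nat) (w : nat -> Omega).

Definition acorr (i : nat) : bool :=
  all (fun j => w j == w (k - i + j)) (iota 1 i).

Definition sper : nat := \max_(1 <= j < k | acorr j) j.

Definition acls (i : nat) : nat :=
  \max_(1 <= j < k | acorr j &&
        has (fun t => i == k - t * (k - j)) (iota 1 (k %/ (k - j)))) j.

Definition inI (i : nat) : bool :=
  has (fun i0 => acorr i0 && (acls i0 == i)) (iota 1 (k - 1)).

(* the block w_{k-i} w_{k-i-1} ... w_{k-i-t+1} equals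
   w_{k-j} w_{k-j-1} ... w_{k-j-t+1}  (with all indices >= 1, i.e. t <= k-j) *)
Definition blocks_match (i j t : nat) : bool :=
  (t <= k - j) && all (fun m => w (k - i - m) == w (k - j - m)) (iota 0 t).

Definition Tfun (i : nat) : nat :=
  \max_(1 <= t < k.+1 |
        has (fun j => inI j && (i < j) && blocks_match i j t) (iota 1 (k - 1))) t.

End Autocorr.

(* Let p = k - s, the least period of w.  An element i <> s of I is a border
   whose period k - i is not a multiple of p (otherwise the class of i would
   contain s), so Fine–Wilf forces i < p.  If the block after position k - i
   matches the block after k - j for j in I, j > i, over a length t with
   i + t >= p, then the suffix of w of length j + t has period j - i and also
   period p, and Fine–Wilf again gives p | j - i: impossible, since either
   j = s and then p | k - i, or j < p and then 0 < j - i < p. *)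

From mathcomp Require Import all_boot.
From mathcomp Require Import zify.

Set Implicit Arguments. Unset Strict Implicit. Unset Printing Implicit Defensive.

Section Borders.
Variables (Omega : finType) (w : nat -> Omega).

Definition has_period (a b q : nat) :=
  forall m, a <= m -> m + q <= b -> w m = w (m + q).

Lemma has_period_subn a b p q :
  has_period a b p -> has_period a b q -> p <= q -> a + p + q <= b + 1 ->
  has_period a b (q - p).
Proof.
move=> Pp Pq le_pq hb m am mb.
case: (leqP (m + q) b) => h.
  rewrite (Pq m am h).
  have -> : m + q = m + (q - p) + p by lia.
  by symmetry; apply: Pp; lia.
have e1 : w (m - p) = w m.
  have {2}-> : m = m - p + p by lia.
  by apply: Pp; lia.
have e2 : w (m - p) = w (m - p + q) by apply: Pq; lia.
have -> : m + (q - p) = m - p + q by lia.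
by rewrite -e2 e1.
Qed.

(* Weak Fine–Wilf theorem, by the subtractive Euclidean algorithm. *)
Lemma has_period_gcdn a b p q :
  has_period a b p -> has_period a b q -> a + p + q <= b + 1 ->
  has_period a b (gcdn p q).
Proof.
have [n] := ubnP (p + q); elim: n p q => [|n IH] p q; first by [].
move=> pq_n Pp Pq hb.
case: (posnP p) => [->|p_gt0]; first by rewrite gcd0n.
case: (posnP q) => [->|q_gt0]; first by rewrite gcdn0.
case: (leqP p q) => h.
  have -> : gcdn p q = gcdn p (q - p) by rewrite -{1}(subnKC h) gcdnDl.
  by apply: IH => //; [lia | exact: has_period_subn | lia].
have -> : gcdn p q = gcdn (p - q) q.
  by rewrite gcdnC -{1}(subnKC (ltnW h)) gcdnDl gcdnC.
apply: IH => //; [lia | | lia].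
by apply: has_period_subn => //; [exact: ltnW | lia].
Qed.

Lemma has_period_extend b p g a : 0 < p ->
  has_period 1 b p -> has_period a b g -> 1 <= a -> a + p + g <= b + 1 ->
  has_period 1 b g.
Proof.
move=> p_gt0 Pp; elim: a => [|a IH] Pg a_ge1 hb; first by [].
case: (posnP a) => [a0|a_gt0]; first by rewrite a0 in Pg.
apply: IH => //; last by lia.
move=> m am mb; case: (ltnP a m) => h; first by apply: Pg.
have -> : m = a by lia.
rewrite (Pp a) //; last by lia.
rewrite (Pp (a + g)); try lia.
by rewrite -addnA (addnC g p) addnA; apply: Pg; lia.
Qed.

Variable k : nat.

Lemma acorr_periodP b :
  b <= k -> reflect (has_period 1 k (k - b)) (acorr k w b).
Proof.
move=> bk; apply: (iffP allP) => [H m m1 mk | P m].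
  have := H m; rewrite mem_iota => /(_ ltac:(lia)) /eqP ->.
  by congr (w _); lia.
rewrite mem_iota => hm; apply/eqP; rewrite (P m); try lia.
by congr (w _); lia.
Qed.

Lemma leq_sper j : acorr k w j -> 1 <= j < k -> j <= sper k w.
Proof.
move=> aj hj; apply: (@leq_bigmax_seq _ _ _ (fun j => j) j) => //.
by rewrite mem_index_iota.
Qed.

Lemma sper_spec : sper k w = 0 \/ acorr k w (sper k w) /\ 1 <= sper k w < k.
Proof.
rewrite /sper big_seq_cond; elim/big_ind: _; first by left.
  by move=> x y Hx Hy; case: (leqP x y).
by move=> j /andP[]; rewrite mem_index_iota; right.
Qed.

Lemma acorr_sper : acorr k w (sper k w).
Proof. by case: sper_spec => [->|[]]. Qed.

Lemma sper_lt : 0 < k -> sper k w < k.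
Proof. by move=> k_gt0; case: sper_spec => [->|[_ /andP[]]]. Qed.

Lemma sper_period : has_period 1 k (k - sper k w).
Proof.
have s_le_k : sper k w <= k by case: sper_spec => [->|[_ /andP[_ /ltnW]]].
by apply/acorr_periodP; [exact: s_le_k | exact: acorr_sper].
Qed.

(* By Fine–Wilf, gcd (k - s) d is a period of the suffix, hence of all of w;
   minimality of the period k - s then forces k - s | d. *)
Lemma dvdn_sper_period a d : 0 < k -> 1 <= a -> has_period a k d ->
  a + (k - sper k w) + d <= k + 1 -> (k - sper k w) %| d.
Proof.
move=> k_gt0 a_ge1 Pd hb.
case: (posnP d) => [->|d_gt0]; first exact: dvdn0.
have s_lt := sper_lt k_gt0.
set p := k - sper k w in hb *.
have p_gt0 : 0 < p by rewrite subn_gt0.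
have p_le_k : p <= k by rewrite leq_subr.
have Pp : has_period a k p by move=> m am mk; apply: sper_period => //; lia.
have g_gt0 : 0 < gcdn p d by rewrite gcdn_gt0 p_gt0.
have g_le_p : gcdn p d <= p by apply: dvdn_leq => //; apply: dvdn_gcdl.
have g_le_d : gcdn p d <= d by apply: dvdn_leq => //; apply: dvdn_gcdr.
have Pg : has_period 1 k (gcdn p d).
  apply: (@has_period_extend _ p _ a) => //; last by lia.
    exact: sper_period.
  by apply: has_period_gcdn.
have [g_lt_p|] := ltnP (gcdn p d) p.
  have : k - gcdn p d <= sper k w.
    apply: leq_sper; last by lia.
    apply/acorr_periodP; first exact: leq_subr.
    by rewrite -/p subKn // (leq_trans g_le_p p_le_k).
  by have : p = k - sper k w by []; lia.
move=> p_le_g; have <- : gcdn p d = p by apply/eqP; rewrite eqn_leq g_le_p.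
exact: dvdn_gcdr.
Qed.

Lemma border_lt_sper_period i : 0 < k -> acorr k w i -> i < k ->
  ~~ ((k - sper k w) %| (k - i)) -> i < k - sper k w.
Proof.
move=> k_gt0 ai ik; apply: contraR; rewrite -leqNgt => le_p_i.
apply: (@dvdn_sper_period 1) => //; last by lia.
by apply/acorr_periodP => //; exact: ltnW.
Qed.

Lemma leq_acls i0 j : acorr k w j -> 1 <= j < k -> i0 < k ->
  (k - j) %| (k - i0) -> j <= acls k w i0.
Proof.
move=> aj hj i0k /divnK tE.
apply: (@leq_bigmax_seq _ _ _ (fun j => j) j); first by rewrite mem_index_iota.
rewrite aj; apply/hasP; exists ((k - i0) %/ (k - j)); last by apply/eqP; lia.
rewrite mem_iota add1n ltnS divn_gt0 ?leq_div2r ?leq_subr ?andbT; try lia.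
by apply: dvdn_leq; [lia | rewrite -tE dvdn_mull].
Qed.

Lemma acls_spec i0 : acorr k w i0 -> 1 <= i0 < k ->
  [/\ acorr k w (acls k w i0), 1 <= acls k w i0 < k
    & (k - acls k w i0) %| (k - i0)].
Proof.
move=> ai0 hi0; have := leq_acls ai0 hi0 (proj2 (andP hi0)) (dvdnn _).
rewrite /acls big_seq_cond; elim/big_ind: _.
- by move=> ?; exfalso; lia.
- by move=> x y Hx Hy; case: (leqP x y).
move=> j /andP[]; rewrite mem_index_iota => hj /andP[aj /hasP[t _ /eqP i0E]] _.
by split=> //; apply/dvdnP; exists t; lia.
Qed.

Lemma inIP i :
  inI k w i -> exists2 i0, acorr k w i0 /\ 1 <= i0 < k & acls k w i0 = i.
Proof.
case/hasP=> i0; rewrite mem_iota => hi0 /andP[ai0 /eqP <-].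
by exists i0; split=> //; lia.
Qed.

Lemma inI_border i : inI k w i -> acorr k w i /\ 1 <= i < k.
Proof. by case/inIP=> i0 [ai0 hi0] <-; case: (acls_spec ai0 hi0). Qed.

(* Otherwise s would lie in the class of i, and exceed it. *)
Lemma inI_sper_period_ndvd i : inI k w i -> i != sper k w ->
  ~~ ((k - sper k w) %| (k - i)).
Proof.
case/inIP=> i0 [ai0 hi0] iE; rewrite -iE.
have [ai hi dvd_i_i0] := acls_spec ai0 hi0.
apply: contra => dvd_p_i; rewrite eqn_leq leq_sper //=.
have i_le_s : acls k w i0 <= sper k w by apply: leq_sper.
have s_lt : sper k w < k by apply: sper_lt; lia.
apply: leq_acls; rewrite ?acorr_sper ?(dvdn_trans dvd_p_i) //; lia.
Qed.

(* The stretch of w from k - j - t + 1 to k has period j - i: below k - j + 1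
   this is the block match, above it the periods k - i and k - j. *)
Lemma blocks_match_period i j t : acorr k w i -> acorr k w j -> i < j < k ->
  blocks_match k w i j t -> has_period (k - j - t + 1) k (j - i).
Proof.
move=> ai aj /andP[ij jk] /andP[tj /allP bm] m am mk.
have Pi : has_period 1 k (k - i) by apply/acorr_periodP => //; lia.
have Pj : has_period 1 k (k - j) by apply/acorr_periodP => //; lia.
case: (ltnP (k - j) m) => hm.
  have e_j : w (m + j - k) = w m by rewrite Pj; [congr (w _) | |]; lia.
  have e_i : w (m + j - k) = w (m + (j - i)).
    by rewrite Pi; [congr (w _) | |]; lia.
  by rewrite -e_j e_i.
have := bm (k - j - m); rewrite mem_iota => /(_ ltac:(lia)) /eqP.
have -> : k - i - (k - j - m) = m + (j - i) by lia.
by have -> : k - j - (k - j - m) = m by lia; move=> <-.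
Qed.

Lemma inI_blocks_match_lt i j t : inI k w i -> i != sper k w -> inI k w j ->
  i < j -> blocks_match k w i j t -> i + t < k - sper k w.
Proof.
move=> Ii i_neq_s Ij ij bm.
have [ai hi] := inI_border Ii; have [aj hj] := inI_border Ij.
have k_gt0 : 0 < k by lia.
rewrite ltnNge; apply/negP => le_p_it.
have tj : t <= k - j by case/andP: bm.
have dvd_p_ji : (k - sper k w) %| (j - i).
  apply: (@dvdn_sper_period (k - j - t + 1)) => //; try lia.
  by apply: blocks_match_period => //; rewrite ij; case/andP: hj.
have [j_eq_s|j_neq_s] := eqVneq j (sper k w).
  move/negP: (inI_sper_period_ndvd Ii i_neq_s); apply.
  have -> : k - i = (j - i) + (k - sper k w) by lia.
  by rewrite dvdn_add.
have j_lt_p : j < k - sper k w.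
  apply: border_lt_sper_period => //; first by case/andP: hj.
  exact: inI_sper_period_ndvd.
have := dvdn_leq (_ : 0 < j - i) dvd_p_ji; lia.
Qed.
End Borders.

Theorem proposition4p1 (Omega : finType) (k : nat) (w : nat -> Omega) (i : nat) :
  inI k w i -> i != sper k w -> i + Tfun k w i < k - sper k w.
Proof.
move=> Ii i_neq_s.
have [ai /andP[i_ge1 i_lt_k]] := inI_border Ii.
rewrite /Tfun big_seq_cond; elim/big_ind: _.
- rewrite addn0; apply: border_lt_sper_period => //; first lia.
  exact: inI_sper_period_ndvd.
- by move=> x y hx hy; case: (leqP x y).
move=> t /andP[_ /hasP[j _ /andP[/andP[Ij ij] bm]]].
exact: (inI_blocks_match_lt Ii i_neq_s Ij ij bm).
Qed.
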